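(* Every connected graph $G$ with at least $2$ vertices has a connecting transition set of size $\tau(G)$, where $$\tau(G)=\sum_{C}\begin{cases}|C|-2 & \text{if } G[C] \text{ is connected},\\ |C|-1 & \text{otherwise},\end{cases}$$ the sum ranging over all co-connected components $C$ of $G$ with $|C|\ge 2$.
   Context: All graphs are finite, simple and undirected. $G[X]$ denotes the subgraph induced by $X\subseteq V(G)$. The complement $\bar G$ of $G$ has vertex set $V(G)$ and an edge $xy$ ($x\ne y$) iff $xy\notin E(G)$. A co-connected component of $G$ is (the vertex set of) a connected component of $\bar G$. A transition of a graph $G$ is an unordered pair $\{ab,bc\}$ of two distinct edges of $G$ sharing the vertex $b$ (so $a\neq c$); it is written $abc$. A walk in $G$ is a sequence $(v_1,\dots,v_k)$ of vertices with $v_iv_{i+1}\in E(G)$ for all $i\le k-1$; it leads from $v_1$ to $v_k$. For a set $T$ of transitions of $G$, a walk $(v_1,\dots,v_k)$ is $T$-compatible if for every $i\in[1,k-2]$, either $v_i=v_{i+2}$ or $v_iv_{i+1}v_{i+2}\in T$. The graph $G$ is $T$-connected, and $T$ is a connecting transition set of $G$, if for all vertices $u,v$ of $G$ there is a $T$-compatible walk leading from $u$ to $v$. *)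

From mathcomp Require Import all_boot.
Set Implicit Arguments. Unset Strict Implicit. Unset Printing Implicit Defensive.

Section Graphs.
Variable T : finType.

Definition simple_graph (e : rel T) : Prop := symmetric e /\ irreflexive e.

Definition graph_connected (e : rel T) : Prop := forall u v : T, connect e u v.

Definition compl_rel (e : rel T) : rel T := fun x y => (x != y) && ~~ e x y.

Definition cocomponents (e : rel T) : {set {set T}} :=
  [set [set y | connect (compl_rel e) x y] | x : T].

Definition induced_rel (e : rel T) (C : {set T}) : rel T :=
  fun x y => [&& e x y, x \in C & y \in C].

Definition induced_connectedb (e : rel T) (C : {set T}) : bool :=
  [forall x in C, forall y in C, connect (induced_rel e C) x y].

Definition tau (e : rel T) : nat :=
  \sum_(C in cocomponents e | 1 < #|C|)
     (if induced_connectedb e C then #|C| - 2 else #|C| - 1).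

(* A transition abc = {ab, bc} (a <> c) is encoded canonically as the pair
   (b, {a, c}), which identifies abc and cba. *)
Definition is_transition (e : rel T) (t : T * {set T}) : Prop :=
  exists a c, [/\ a != c, e a t.1, e t.1 c & t.2 = [set a; c]].

Definition transition_set (e : rel T) (Tr : {set T * {set T}}) : Prop :=
  forall t, t \in Tr -> is_transition e t.

Definition walk (e : rel T) (x : T) (p : seq T) : bool := path e x p.

Definition compatible (Tr : {set T * {set T}}) (x : T) (p : seq T) : Prop :=
  let s := x :: p in
  forall i, i.+2 < size s ->
    nth x s i = nth x s i.+2 \/
    (nth x s i.+1, [set nth x s i; nth x s i.+2]) \in Tr.

Definition T_connected (e : rel T) (Tr : {set T * {set T}}) : Prop :=
  forall u v : T, exists p : seq T,
    [/\ walk e u p, last u p = v & compatible Tr u p].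

End Graphs.

From mathcomp Require Import all_boot.
Set Implicit Arguments. Unset Strict Implicit. Unset Printing Implicit Defensive.

(* Every vertex outside a co-connected component C is adjacent to every vertex
   of C, so walks between different components need no transition, and it
   suffices to make each C internally T-connected.  For a connected graph H
   with an edge ab, grow a vertex set A from {a, b}, keeping for every x in A a
   dart (x, c) from which the dart (a, b) is reachable by a T-compatible walk,
   and from (a, b) the dart (c, x).  A new vertex y adjacent to z in A, whose
   dart is (z, w), only needs the transition yzw; hence |V(H)| - 2 transitions
   make H T-connected.  Take H = G[C] if it is connected, and otherwise the star
   joining C to some vertex outside it, which has |C| + 1 vertices. *)

Lemma card_bigcup_disjoint (I X : finType) (P : pred I) (F : I -> {set X}) :
  {in P &, forall i j, i != j -> [disjoint F i & F j]} ->
  #|\bigcup_(i | P i) F i| = \sum_(i | P i) #|F i|.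
Proof.
move=> disF; pose G i := if P i then F i else set0.
have disG i j : i != j -> [disjoint G i & G j].
  rewrite /G; case: ifP => Pi; last by rewrite -setI_eq0 set0I.
  by case: ifP => Pj; [apply: disF | rewrite -setI_eq0 setI0].
have -> : \bigcup_(i | P i) F i = \bigcup_i G i by rewrite big_mkcond.
rewrite -sum1_card (partition_disjoint_bigcup _ _ disG) [RHS]big_mkcond.
by apply: eq_bigr => i _; rewrite sum1_card /G; case: ifP; rewrite ?cards0.
Qed.

Section Compatibility.
Variable T : finType.
Implicit Types (Tr : {set T * {set T}}) (s : seq T).

Definition turn_ok Tr (x y z : T) : bool := (x == z) || ((y, [set x; z]) \in Tr).

Fixpoint compatibleb Tr s : bool :=
  match s with
  | x :: ((y :: z :: _) as s') => turn_ok Tr x y z && compatibleb Tr s'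
  | _ => true
  end.

Lemma compatiblebP Tr x0 s : compatibleb Tr s <->
  (forall i, i.+2 < size s -> turn_ok Tr (nth x0 s i) (nth x0 s i.+1) (nth x0 s i.+2)).
Proof.
elim: s => [|x s IHs]; first by [].
case: s IHs => [|y [|z s]] IHs; try by split => // _ [|[|i]].
split => [/= /andP[ok_xyz ok_s] [|i] //= lt_i | ok_s /=].
  exact: (proj1 IHs ok_s i).
by rewrite (ok_s 0) //=; apply/IHs => i lt_i; apply: (ok_s i.+1).
Qed.

Lemma compatibleE Tr x p : compatible Tr x p <-> compatibleb Tr (x :: p).
Proof.
rewrite /compatible; cbv zeta; split => [ok | /(compatiblebP _ x) ok i lt_i].
  apply/(compatiblebP _ x) => i lt_i.
  by case: (ok i lt_i) => [->|in_Tr]; rewrite /turn_ok ?eqxx ?in_Tr ?orbT.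
by case/orP: (ok i lt_i) => [/eqP|]; [left|right].
Qed.

Lemma compatiblebS Tr Tr' s : Tr \subset Tr' -> compatibleb Tr s -> compatibleb Tr' s.
Proof.
move=> sTr; elim: s => [|x s IHs] //=.
case: s IHs => [|y [|z s]] IHs // /andP[ok_xyz ok_s]; rewrite IHs // andbT.
case/orP: ok_xyz => [/eqP-> | /(subsetP sTr) in_Tr];
  by rewrite /turn_ok ?eqxx ?in_Tr ?orbT.
Qed.

Lemma compatibleb_cons3 Tr x y z s :
  compatibleb Tr [:: x, y, z & s] = turn_ok Tr x y z && compatibleb Tr [:: y, z & s].
Proof. by []. Qed.

Lemma compatibleb_cat Tr s c d s' :
  compatibleb Tr (s ++ [:: c, d & s']) =
  compatibleb Tr (s ++ [:: c; d]) && compatibleb Tr [:: c, d & s'].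
Proof.
elim: s => [|x s IHs] //; rewrite !cat_cons.
case: s IHs => [|y [|z s]] IHs; rewrite ?cat0s ?cat_cons !compatibleb_cons3.
- by rewrite -andbA.
- by rewrite -!andbA.
- by move: IHs; rewrite !cat_cons => ->; rewrite andbA.
Qed.

Lemma compatibleS Tr Tr' x p :
  Tr \subset Tr' -> compatible Tr x p -> compatible Tr' x p.
Proof. by move=> sTr /compatibleE /(compatiblebS sTr) /compatibleE. Qed.

End Compatibility.

Section Darts.
Variables (T : finType) (r : rel T).
Implicit Type Tr : {set T * {set T}}.

(* Reachability is between darts (directed edges) rather than vertices, since
   which continuations of a T-compatible walk are allowed depends on its last edge. *)
Definition dart_reach Tr (x c x' c' : T) : Prop :=
  exists s, [/\ path r x (c :: s), compatibleb Tr [:: x, c & s] &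
                exists q, [:: x, c & s] = q ++ [:: x'; c']].

Lemma dart_reach_refl Tr x c : r x c -> dart_reach Tr x c x c.
Proof. by move=> rxc; exists [::]; rewrite /= rxc; split => //; exists [::]. Qed.

Lemma dart_reach_turn Tr x y z :
  r x y -> r y z -> turn_ok Tr x y z -> dart_reach Tr x y y z.
Proof.
by move=> rxy ryz ok; exists [:: z]; rewrite /= rxy ryz ok; split => //; exists [:: x].
Qed.

Lemma dart_reach_trans Tr x c x' c' x'' c'' :
  dart_reach Tr x c x' c' -> dart_reach Tr x' c' x'' c'' ->
  dart_reach Tr x c x'' c''.
Proof.
move=> [s1 [p1 ok1 [q1 E1]]] [s2 [p2 ok2 [q2 E2]]].
have E : [:: x, c & s1] ++ s2 = q1 ++ [:: x', c' & s2] by rewrite E1 -catA.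
have last_c : last c s1 = c' by have := congr1 (last x) E1; rewrite last_cat.
exists (s1 ++ s2); split.
- by rewrite -cat_cons cat_path p1 /= last_c; case/andP: p2.
- by rewrite -!cat_cons E compatibleb_cat -E1 ok1 ok2.
- by exists (q1 ++ q2); rewrite -!cat_cons E E2 catA.
Qed.

Lemma dart_reachS Tr Tr' x c x' c' :
  Tr \subset Tr' -> dart_reach Tr x c x' c' -> dart_reach Tr' x c x' c'.
Proof. by move=> sTr [s [p ok q]]; exists s; split => //; apply: compatiblebS ok. Qed.

Lemma dart_reach_edge Tr x c x' c' : dart_reach Tr x c x' c' -> r x c.
Proof. by case=> s [/andP[]]. Qed.

Lemma dart_reach_walk Tr x c x' c' : dart_reach Tr x c x' c' ->
  exists p, [/\ walk r x p, last x p = c' & compatible Tr x p].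
Proof.
case=> s [p ok [q E]]; exists (c :: s); split => //; last exact/compatibleE.
by have := congr1 (last x) E; rewrite last_cat.
Qed.

End Darts.

Section Connectivity.
Variable T : finType.
Implicit Types (e : rel T) (Tr : {set T * {set T}}) (C : {set T}).

Definition T_connected_on e Tr C : Prop :=
  forall u v, u \in C -> v \in C ->
    exists p, [/\ walk e u p, last u p = v & compatible Tr u p].

Definition connecting_on e C Tr : Prop :=
  [/\ transition_set e Tr, forall t, t \in Tr -> t.2 \subset C & T_connected_on e Tr C].

Lemma T_connected_onS e Tr Tr' C :
  Tr \subset Tr' -> T_connected_on e Tr C -> T_connected_on e Tr' C.
Proof.
move=> sTr conn u v uC vC; have [p [wp lp cp]] := conn u v uC vC.
by exists p; split => //; apply: compatibleS cp.
Qed.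

Lemma T_connected_on_sub e e' Tr C :
  subrel e e' -> T_connected_on e Tr C -> T_connected_on e' Tr C.
Proof.
move=> see' conn u v uC vC; have [p [wp lp cp]] := conn u v uC vC.
by exists p; split => //; apply: sub_path wp.
Qed.

Lemma transition_set_sub e e' Tr :
  subrel e e' -> transition_set e Tr -> transition_set e' Tr.
Proof.
move=> see' trans t /trans [x [y [xy ext eyt t2E]]].
by exists x, y; split => //; apply: see'.
Qed.

Lemma transition_ends_sub e Tr C : (forall x y, e x y -> x \in C /\ y \in C) ->
  transition_set e Tr -> forall t, t \in Tr -> t.2 \subset C.
Proof.
move=> eC trans t /trans [x [y [_ /eC[xC _] /eC[_ yC] ->]]].
by apply/subsetP => z; rewrite !inE => /orP[] /eqP ->.
Qed.

Lemma connect_exit e (A : {set T}) x y : connect e x y -> x \in A -> y \notin A ->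
  exists z y', [/\ z \in A, y' \notin A & e z y'].
Proof.
move/connectP => [p ep ->{y}]; elim: p x ep => [|x' p IHp] x /=; first by move=> _ ->.
case/andP=> exx' ep xA yA; case x'A: (x' \in A); first exact: IHp ep x'A yA.
by exists x, x'; rewrite x'A.
Qed.

End Connectivity.

Section Spanning.
Variables (T : finType) (r : rel T) (S : {set T}) (a b : T).
Hypotheses (r_sym : symmetric r) (r_in_S : forall x y, r x y -> x \in S).
Hypotheses (S_connected : forall x, x \in S -> connect r a x).
Hypotheses (neq_ab : a != b) (r_ab : r a b).
Implicit Types (A : {set T}) (Tr : {set T * {set T}}).

Definition spanning_inv A Tr : Prop :=
  [/\ [set a; b] \subset A, A \subset S, #|Tr| = #|A| - 2,
      forall t, t \in Tr -> t.2 \subset A /\ is_transition r t &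
      forall x, x \in A ->
        exists2 c, c \in A & dart_reach r Tr x c a b /\ dart_reach r Tr a b c x].

Lemma spanning_inv_edge : spanning_inv [set a; b] set0.
Proof.
have r_ba : r b a by rewrite r_sym.
split=> [||||x].
- exact: subxx.
- apply/subsetP => x; rewrite !inE => /orP[] /eqP ->.
    exact: r_in_S r_ab.
  exact: r_in_S r_ba.
- by rewrite cards0 cards2 neq_ab.
- by move=> t; rewrite inE.
rewrite !inE => /orP[] /eqP ->.
  exists b; rewrite ?inE ?eqxx ?orbT //; split; first exact: dart_reach_refl.
  by apply: dart_reach_turn; rewrite // /turn_ok eqxx.
exists a; rewrite ?inE ?eqxx //; split; last exact: dart_reach_refl.
by apply: dart_reach_turn; rewrite // /turn_ok eqxx.
Qed.

Lemma spanning_inv_add A Tr z y : spanning_inv A Tr ->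
  z \in A -> y \notin A -> r z y -> exists Tr', spanning_inv (y |: A) Tr'.
Proof.
case=> abA AS cardTr trTr reachTr zA yA r_zy.
have [w wA [reach_zw reach_wz]] := reachTr z zA.
have r_zw := dart_reach_edge reach_zw.
have r_yz : r y z by rewrite r_sym.
have ywA : [set y; w] \subset y |: A.
  by apply/subsetP => v; rewrite !inE => /orP[] /eqP ->; rewrite ?eqxx ?wA ?orbT.
set t := (z, [set y; w]).
have tTr : t \notin Tr.
  by apply: contra yA => /trTr [/subsetP tA _]; apply: tA; rewrite !inE eqxx.
have sA : A \subset y |: A by apply: subsetUr.
have sTr : Tr \subset t |: Tr by apply: subsetUr.
have ok_yzw : turn_ok (t |: Tr) y z w by rewrite /turn_ok !inE eqxx orbT.
have ok_wzy : turn_ok (t |: Tr) w z y by rewrite /turn_ok setUC !inE eqxx orbT.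
have card2A : 2 <= #|A|.
  by have := subset_leq_card abA; rewrite cards2 neq_ab.
exists (t |: Tr); split.
- exact: subset_trans abA sA.
- by rewrite subUset sub1set (r_in_S r_yz) AS.
- by rewrite !cardsU1 tTr yA cardTr /= addnBA.
- move=> t'; rewrite !inE => /orP[/eqP -> | /trTr [t'A trans]].
    split=> //; exists y, w; split => //.
    by apply: contraNneq yA => ->.
  by split=> //; apply: subset_trans sA.
move=> x; rewrite !inE => /orP[/eqP -> | xA]; last first.
  have [c cA [reach_xc reach_cx]] := reachTr x xA.
  by exists c; rewrite ?inE ?cA ?orbT //; split; apply: dart_reachS sTr _.
exists z; rewrite ?inE ?zA ?orbT //; split.
  apply: dart_reach_trans (dart_reachS sTr reach_zw).
  by apply: dart_reach_turn; rewrite // r_sym.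
apply: dart_reach_trans (dart_reachS sTr reach_wz) _.
by apply: dart_reach_turn; rewrite // r_sym.
Qed.

Lemma spanning_inv_full : exists Tr, spanning_inv S Tr.
Proof.
suff grow A Tr : spanning_inv A Tr -> exists Tr', spanning_inv S Tr'.
  exact: grow spanning_inv_edge.
have [n] := ubnP #|S :\: A|; elim: n A Tr => // n IHn A Tr ltSA inv.
have [abA AS _ _ _] := inv.
have [eqAS | neqAS] := eqVneq A S; first by exists Tr; rewrite -eqAS.
have [y0 y0S y0A] : exists2 y0, y0 \in S & y0 \notin A.
  by apply/subsetPn; rewrite eqEsubset AS in neqAS.
have aA : a \in A by apply: (subsetP abA); rewrite !inE eqxx.
have [z [y [zA yA r_zy]]] := connect_exit (S_connected y0S) aA y0A.
have [Tr' inv'] := spanning_inv_add inv zA yA r_zy.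
have r_yz : r y z by rewrite r_sym.
apply: IHn inv'; rewrite setUC -setDDl.
by move: ltSA; rewrite (cardsD1 y) !inE yA (r_in_S r_yz).
Qed.

Lemma spanning_transition_set :
  exists Tr, [/\ #|Tr| = #|S| - 2, transition_set r Tr & T_connected_on r Tr S].
Proof.
have [Tr [_ _ cardTr trTr reachTr]] := spanning_inv_full.
exists Tr; split=> // [t /trTr [] // | u v uS vS].
have [c _ [reach_uc _]] := reachTr u uS.
have [d _ [_ reach_dv]] := reachTr v vS.
exact: dart_reach_walk (dart_reach_trans reach_uc reach_dv).
Qed.

End Spanning.

Section Cocomponents.
Variables (T : finType) (e : rel T).
Hypotheses (e_sym : symmetric e) (e_irr : irreflexive e).
Implicit Types (C : {set T}) (Tr : {set T * {set T}}).

Lemma induced_transition_set C : 1 < #|C| -> induced_connectedb e C ->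
  exists2 Tr, connecting_on e C Tr & #|Tr| = #|C| - 2.
Proof.
move=> gt1C /forall_inP conC.
pose r := induced_rel e C.
have r_sym : symmetric r.
  by move=> x y; rewrite /r /induced_rel e_sym [(x \in C) && _]andbC.
have r_in_C x y : r x y -> x \in C /\ y \in C by case/and3P.
have sub_re : subrel r e by move=> x y /and3P[].
have [u [v [uC vC neq_uv]]] := card_gt1P gt1C.
have [b r_ub] : exists b, r u b.
  have /forall_inP /(_ v vC) /connectP [[|b p] /= pth lst] := conC u uC.
    by rewrite lst eqxx in neq_uv.
  by exists b; case/andP: pth.
have neq_ub : u != b by apply: contraTneq r_ub => ->; rewrite /r /induced_rel e_irr.
have r_in_C1 x y : r x y -> x \in C by case/r_in_C.
have conC_u x : x \in C -> connect r u x by have /forall_inP := conC u uC; apply.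
have [Tr [cardTr trTr conTr]] :=
  spanning_transition_set r_sym r_in_C1 conC_u neq_ub r_ub.
exists Tr => //; split.
- exact: transition_set_sub sub_re trTr.
- exact: transition_ends_sub r_in_C trTr.
- exact: T_connected_on_sub sub_re conTr.
Qed.

Lemma star_transition_set C w : w \notin C -> (forall c, c \in C -> e w c) ->
  0 < #|C| -> exists2 Tr, connecting_on e C Tr & #|Tr| = #|C| - 1.
Proof.
move=> wC e_wC /card_gt0P [c cC].
pose r x y := (x == w) && (y \in C) || (y == w) && (x \in C).
have r_sym : symmetric r by move=> x y; rewrite /r orbC.
have sub_re : subrel r e.
  by move=> x y /orP[] /andP[/eqP -> ?]; [apply: e_wC | rewrite e_sym; apply: e_wC].
have r_w x y : r x y -> y != w -> x = w.
  by case/orP=> /andP[/eqP ->] //; rewrite eqxx.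
have neq_wc : w != c by apply: contraNneq wC => ->.
have r_in_S x y : r x y -> x \in w |: C.
  by rewrite !inE => /orP[] /andP[] => [/eqP -> | _ ->]; rewrite ?eqxx ?orbT.
have con_w x : x \in w |: C -> connect r w x.
  rewrite !inE => /orP[/eqP -> | xC]; first exact: connect0.
  by apply: connect1; rewrite /r eqxx xC.
have r_wc : r w c by rewrite /r eqxx cC.
have [Tr [cardTr trTr conTr]] :=
  spanning_transition_set r_sym r_in_S con_w neq_wc r_wc.
exists Tr; last by rewrite cardTr cardsU1 wC.
split.
- exact: transition_set_sub sub_re trTr.
- move=> t /trTr [x [y [neq_xy r_xt r_ty ->]]].
  have [t1w | t1w] := eqVneq t.1 w; last first.
    move: r_ty; rewrite r_sym => r_yt.
    by rewrite (r_w _ _ r_xt t1w) (r_w _ _ r_yt t1w) eqxx in neq_xy.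
  move: r_xt r_ty; rewrite /r t1w eqxx (negPf wC) !andbF !orbF => xC yC.
  by apply/subsetP => z; rewrite !inE => /orP[] /eqP ->.
- move=> u v uC vC; apply: T_connected_on_sub sub_re conTr _ _ _ _;
    by rewrite !inE ?uC ?vC orbT.
Qed.

Definition cocomponent x : {set T} := [set y | connect (compl_rel e) x y].

Lemma compl_rel_sym : symmetric (compl_rel e).
Proof. by move=> x y; rewrite /compl_rel eq_sym e_sym. Qed.

Lemma cocomponent_refl x : x \in cocomponent x.
Proof. by rewrite inE connect0. Qed.

Lemma cocomponent_mem x : cocomponent x \in cocomponents e.
Proof. by apply/imsetP; exists x. Qed.

Lemma cocomponentP C : C \in cocomponents e -> exists x, C = cocomponent x.
Proof. by case/imsetP => x _ ->; exists x. Qed.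

Lemma cocomponent_eq x y : y \in cocomponent x -> cocomponent y = cocomponent x.
Proof.
rewrite inE => con_xy; apply/setP => z; rewrite !inE.
by rewrite (same_connect (sym_connect_sym compl_rel_sym) con_xy).
Qed.

Lemma cocomponents_eq C C' x : C \in cocomponents e -> C' \in cocomponents e ->
  x \in C -> x \in C' -> C = C'.
Proof.
move=> /cocomponentP[y ->] /cocomponentP[y' ->] xC xC'.
by rewrite -(cocomponent_eq xC) -(cocomponent_eq xC').
Qed.

Lemma cocomponent_edge C u v : C \in cocomponents e -> u \in C -> v \notin C -> e u v.
Proof.
move=> /cocomponentP[x ->]; rewrite !inE => con_xu con_xv.
have neq_uv : u != v by apply: contraNneq con_xv => <-.
apply: contraNT con_xv => not_uv; apply: connect_trans con_xu (connect1 _).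
by rewrite /compl_rel neq_uv.
Qed.

Lemma T_connected_cocomponents Tr :
  (forall C, C \in cocomponents e -> T_connected_on e Tr C) -> T_connected e Tr.
Proof.
move=> conTr u v; have [vC | vC] := boolP (v \in cocomponent u).
  exact: conTr (cocomponent_mem u) u v (cocomponent_refl u) vC.
have e_uv := cocomponent_edge (cocomponent_mem u) (cocomponent_refl u) vC.
by exists [:: v]; rewrite /walk /= e_uv; split => // [[|i]].
Qed.

Definition cocomponent_cost C : nat :=
  if 1 < #|C| then (if induced_connectedb e C then #|C| - 2 else #|C| - 1) else 0.

Lemma tau_cocomponent_cost : tau e = \sum_(C in cocomponents e) cocomponent_cost C.
Proof. by rewrite /tau big_mkcondr. Qed.

Hypothesis e_connected : graph_connected e.

Lemma cocomponent_transition_set C : C \in cocomponents e ->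
  exists2 Tr, connecting_on e C Tr & #|Tr| = cocomponent_cost C.
Proof.
move=> CC; rewrite /cocomponent_cost; case: ltnP => [gt1C | le1C]; last first.
  exists set0; rewrite ?cards0 //; split=> [t|t|u v uC vC]; rewrite ?inE //.
  by exists [::]; rewrite (card_le1_eqP le1C u v uC vC).
case: ifP => [conC | disC]; first exact: induced_transition_set.
have [w wC] : exists w, w \notin C.
  case: (pickP [pred w | w \notin C]) => [w wC | allC]; first by exists w.
  have e_C : induced_rel e C =2 e.
    by move=> x y; rewrite /induced_rel (negbFE (allC x)) (negbFE (allC y)) !andbT.
  suff : induced_connectedb e C by rewrite disC.
  by apply/forall_inP => x _; apply/forall_inP => y _; rewrite (eq_connect e_C).
have e_wC c : c \in C -> e w c by move=> cC; rewrite e_sym (cocomponent_edge CC cC wC).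
exact: star_transition_set wC e_wC (ltnW gt1C).
Qed.

Lemma connecting_on_disjoint C C' Tr Tr' :
  C \in cocomponents e -> C' \in cocomponents e -> C != C' ->
  connecting_on e C Tr -> connecting_on e C' Tr' -> [disjoint Tr & Tr'].
Proof.
move=> CC CC' neq_CC' [trTr subTr _] [_ subTr' _].
rewrite -setI_eq0; apply/eqP/setP => t; rewrite !inE; apply/andP => -[tTr tTr'].
have [x [y [_ _ _ t2E]]] := trTr t tTr.
have xt : x \in t.2 by rewrite t2E !inE eqxx.
have xC := subsetP (subTr t tTr) x xt; have xC' := subsetP (subTr' t tTr') x xt.
by rewrite (cocomponents_eq CC CC' xC xC') eqxx in neq_CC'.
Qed.

End Cocomponents.

Theorem theorem3 (T : finType) (e : rel T) :
  simple_graph e -> graph_connected e -> 1 < #|T| ->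
  exists Tr : {set T * {set T}},
    [/\ transition_set e Tr, T_connected e Tr & #|Tr| = tau e].
Proof.
move=> [e_sym e_irr] e_conn _.
have /fin_all_exists [F HF] C : exists Tr, C \in cocomponents e ->
    connecting_on e C Tr /\ #|Tr| = cocomponent_cost e C.
  have [/(cocomponent_transition_set e_sym e_irr e_conn) [Tr] ? ? | _] :=
    boolP (C \in cocomponents e); [by exists Tr | by exists set0].
exists (\bigcup_(C in cocomponents e) F C); split.
- by move=> t /bigcupP [C /HF [[trF _ _] _]]; apply: trF.
- apply: T_connected_cocomponents => // C CC; have [[_ _ conF] _] := HF C CC.
  exact: T_connected_onS (bigcup_sup C CC) conF.
rewrite tau_cocomponent_cost card_bigcup_disjoint => [|C C' CC CC' neq_CC'].
  by apply: eq_bigr => C /HF [].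
exact: connecting_on_disjoint neq_CC' (HF C CC).1 (HF C' CC').1.
Qed.
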